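(* Let $x\in(0,\infty)$. Then: (1) for $k\in\mathbb{Z}$, $a^{\rm st}_k(x)=g(s_k(x))$ and $b^{\rm st}_k(x)=h(s_k(x))$; (2) for $j<k$ in $\mathbb{Z}$, $m^{\rm st}_k(x)-m^{\rm st}_j(x)=\sum_{i=j+1}^k\frac{1}{Z(s_i(x))}$ and $n^{\rm st}_j(x)-n^{\rm st}_k(x)=\sum_{i=j+1}^k\frac{s_i(x)}{Z(s_i(x))}$; in particular $m^{\rm st}_k(x)-m^{\rm st}_{k-1}(x)=Z(s_k(x))^{-1}$ and $n^{\rm st}_{k-1}(x)-n^{\rm st}_k(x)=s_k(x)Z(s_k(x))^{-1}$; (3) for $j,k\in\mathbb{N}$, $\mathcal{M}_{j+1,k+1}(x)=\Big(\sum_{i=-j}^{k+1}\frac{1}{Z(s_i(x))}\Big)^{-1}\sum_{i=-j}^{k+1}\frac{s_i(x)}{Z(s_i(x))}$; (4) $\mathcal{M}(x)=\sum_{i\in\mathbb{Z}}\frac{s_i(x)}{Z(s_i(x))}$.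
   Context: For $x>0$, $\omega=\sqrt{8x+1}$, $c(x)=\frac{(\omega+3)^2}{16}$, $d(x)=\frac{(\omega+3)^2}{8(\omega+1)}$, $s(x)=\frac{(\omega-1)^2}{4(\omega+7)}$; $s_0=\mathrm{id}$, $s_{-1}(x)=1/s(1/x)$, $s_i=s\circ s_{i-1}$, $s_{-i}=s_{-1}\circ s_{-(i-1)}$ ($i\in\mathbb{N}_+$); $c_j=c\circ s_j$, $d_j=d\circ s_j$. Product convention: $\prod_{i=0}^kh_i=h_0\cdots h_k$ for $k\ge0$, $=1$ for $k=-1$, $=h_{k+1}^{-1}\cdots h_{-1}^{-1}$ for $k\le-2$. $Z(x)=\sum_{k\in\mathbb{Z}}\prod_{i=0}^k(c_i(x)-1)$; $f(x)=\frac{xc(x)d(x)}{(c(x)+xd(x))^2}$, $g(x)=Z(x)^{-1}c(x)f(x)$, $h(x)=Z(x)^{-1}xd(x)f(x)$. ABMN system on $\mathbb{Z}$: $a_i,b_i\ge0$, $m_i,n_i\in\mathbb{R}$ with $(a_i+b_i)(m_i+a_i)=a_im_{i+1}+b_im_{i-1}$, $(a_i+b_i)(n_i+b_i)=a_in_{i+1}+b_in_{i-1}$, $(a_i+b_i)^2=b_i(m_{i+1}-m_{i-1})$, $(a_i+b_i)^2=a_i(n_{i-1}-n_{i+1})$; positive if all $a_i,b_i>0$; standard if positive with $\lim_{-\infty}m=0$, $\lim_\infty n=0$, $\lim_\infty m=1$. $(a^{\rm st}(x),b^{\rm st}(x),m^{\rm st}(x),n^{\rm st}(x))$ is the unique standard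 solution with central ratio $\frac{n_{-1}-n_0}{m_0-m_{-1}}=x$; $\mathcal{M}(x)=\lim_{i\to-\infty}n^{\rm st}_i(x)$. For $p,r\in\mathbb{N}_+$, $\mathcal{M}_{p,r}(x)=\frac{n_{-p}-n_r}{m_r-m_{-p}}$ computed for any positive ABMN solution with central ratio $x$ (e.g. the standard one). *)

From Stdlib Require Import Reals Lra ZArith.
From Coquelicot Require Import Coquelicot.
Open Scope R_scope.

Definition omega (x : R) : R := sqrt (8 * x + 1).
Definition cfun (x : R) : R := (omega x + 3) ^ 2 / 16.
Definition dfun (x : R) : R := (omega x + 3) ^ 2 / (8 * (omega x + 1)).
Definition sfun (x : R) : R := (omega x - 1) ^ 2 / (4 * (omega x + 7)).
Definition sfun_m1 (x : R) : R := / sfun (/ x).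

Definition s_iter (i : Z) (x : R) : R :=
  match i with
  | Z0 => x
  | Zpos p => Nat.iter (Pos.to_nat p) sfun x
  | Zneg p => Nat.iter (Pos.to_nat p) sfun_m1 x
  end.

Definition c_j (j : Z) (x : R) : R := cfun (s_iter j x).

Fixpoint prod_nat (F : nat -> R) (n : nat) : R :=
  match n with
  | O => 1
  | S n' => prod_nat F n' * F n'
  end.

Fixpoint sum_nat (F : nat -> R) (n : nat) : R :=
  match n with
  | O => 0
  | S n' => sum_nat F n' + F n'
  end.

(* zsum F j k = sum_{i=j}^{k} F i  (empty, = 0, if k < j) *)
Definition zsum (F : Z -> R) (j k : Z) : R :=
  sum_nat (fun t => F (j + Z.of_nat t)%Z) (Z.to_nat (k - j + 1)).

(* The product convention prod_{i=0}^k (c_i(x) - 1):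
   k >= 0 : (c_0 - 1) ... (c_k - 1);  k = -1 : 1;
   k <= -2 : (c_{k+1} - 1)^{-1} ... (c_{-1} - 1)^{-1}. *)
Definition prodc (k : Z) (x : R) : R :=
  if (0 <=? k)%Z then
    prod_nat (fun t => c_j (Z.of_nat t) x - 1) (Z.to_nat k + 1)
  else
    prod_nat (fun t => / (c_j (- Z.of_nat t - 1)%Z x - 1)) (Z.to_nat (- k - 1)).

(* Z(x) = sum_{k in Z} prod_{i=0}^k (c_i(x) - 1), split as k >= 0 and k <= -1 *)
Definition Zfun (x : R) : R :=
  Series (fun p : nat => prodc (Z.of_nat p) x)
  + Series (fun p : nat => prodc (- Z.of_nat p - 1)%Z x).

Definition ffun (x : R) : R :=
  x * cfun x * dfun x / (cfun x + x * dfun x) ^ 2.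
Definition gfun (x : R) : R := / Zfun x * cfun x * ffun x.
Definition hfun (x : R) : R := / Zfun x * x * dfun x * ffun x.

Definition ABMN (a b m n : Z -> R) : Prop :=
  forall i : Z,
    0 <= a i /\ 0 <= b i /\
    (a i + b i) * (m i + a i) = a i * m (i + 1)%Z + b i * m (i - 1)%Z /\
    (a i + b i) * (n i + b i) = a i * n (i + 1)%Z + b i * n (i - 1)%Z /\
    (a i + b i) ^ 2 = b i * (m (i + 1)%Z - m (i - 1)%Z) /\
    (a i + b i) ^ 2 = a i * (n (i - 1)%Z - n (i + 1)%Z).

Definition positive_ABMN (a b m n : Z -> R) : Prop :=
  ABMN a b m n /\ forall i : Z, 0 < a i /\ 0 < b i.

Definition standard_ABMN (a b m n : Z -> R) : Prop :=
  positive_ABMN a b m n /\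
  is_lim_seq (fun p : nat => m (- Z.of_nat p)%Z) 0 /\
  is_lim_seq (fun p : nat => n (Z.of_nat p)) 0 /\
  is_lim_seq (fun p : nat => m (Z.of_nat p)) 1.

Definition central_ratio (m n : Z -> R) : R :=
  (n (-1)%Z - n 0%Z) / (m 0%Z - m (-1)%Z).

Definition Mpr (p r : Z) (m n : Z -> R) : R :=
  (n (- p)%Z - n r) / (m r - m (- p)%Z).

(* For a positive ABMN solution the node equations give
   m_{i+1} - m_i = 2a_i + b_i, m_i - m_{i-1} = a_i^2/b_i, n_{i-1} - n_i = a_i + 2b_i and
   n_i - n_{i+1} = b_i^2/a_i.  With t_i = b_i/a_i the ratio r_i = (n_{i-1} - n_i)/(m_i - m_{i-1})
   equals t_i(1 + 2t_i) while r_{i+1} = t_i^2/(2 + t_i).  At such points sqrt(8r+1) = 4t+1 is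
   rational and s(r_i) = r_{i+1}, so r_i = s_i(x) where x = r_0 is the central ratio.  Moreover
   c(r_i) - 1 = t_i^2 + 2t_i = (m_{i+1} - m_i)/(m_i - m_{i-1}), so the products defining Z(r_k)
   telescope to ratios of increments of m, and since m runs from 0 to 1 we get
   Z(r_k) = 1/(m_k - m_{k-1}).  All remaining identities are telescoping sums; the tail of
   sum_{i<0} s_i/Z(s_i) converges because a + 2b <= 2(2a + b). *)
From Pilot Require Import Defs.
From Stdlib Require Import Reals ZArith Lra Lia Psatz.
From Coquelicot Require Import Coquelicot.
Open Scope R_scope.

Lemma omega_param t : 0 < t -> omega (t * (1 + 2 * t)) = 4 * t + 1.
Proof.
intro Ht; unfold omega.
replace (8 * (t * (1 + 2 * t)) + 1) with ((4 * t + 1) ^ 2) by ring.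
apply sqrt_pow2; lra.
Qed.

Lemma sfun_param t : 0 < t -> sfun (t * (1 + 2 * t)) = t ^ 2 / (2 + t).
Proof. intro Ht; unfold sfun; rewrite omega_param by lra; field; lra. Qed.

Lemma sfun_m1_param t : 0 < t -> sfun_m1 (t ^ 2 / (2 + t)) = t * (1 + 2 * t).
Proof.
intro Ht; unfold sfun_m1.
replace (/ (t ^ 2 / (2 + t))) with (/ t * (1 + 2 * / t)) by (field; lra).
rewrite sfun_param by (apply Rinv_0_lt_compat; lra).
field; lra.
Qed.

Lemma cfun_param t : 0 < t -> cfun (t * (1 + 2 * t)) = (t + 1) ^ 2.
Proof. intro Ht; unfold cfun; rewrite omega_param by lra; field. Qed.

Lemma dfun_param t : 0 < t -> dfun (t * (1 + 2 * t)) = (t + 1) ^ 2 / (2 * t + 1).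
Proof. intro Ht; unfold dfun; rewrite omega_param by lra; field; lra. Qed.

Lemma ffun_param t : 0 < t -> ffun (t * (1 + 2 * t)) = t / (t + 1) ^ 2.
Proof.
intro Ht; unfold ffun; rewrite cfun_param, dfun_param by lra.
replace ((t + 1) ^ 2 + t * (1 + 2 * t) * ((t + 1) ^ 2 / (2 * t + 1))) with ((t + 1) ^ 3)
  by (field; lra).
field; lra.
Qed.

Lemma s_iter_orbit (r : Z -> R) :
  (forall i, sfun (r i) = r (i + 1)%Z) -> (forall i, sfun_m1 (r (i + 1)%Z) = r i) ->
  forall j k, s_iter j (r k) = r (k + j)%Z.
Proof.
intros Hs Hs1.
assert (Hfwd : forall p k, Nat.iter p sfun (r k) = r (k + Z.of_nat p)%Z).
{ induction p as [|p IH]; intro k; simpl.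
  - f_equal; lia.
  - rewrite IH, Hs; f_equal; lia. }
assert (Hbwd : forall p k, Nat.iter p sfun_m1 (r k) = r (k - Z.of_nat p)%Z).
{ induction p as [|p IH]; intro k; simpl.
  - f_equal; lia.
  - rewrite IH.
    replace (k - Z.of_nat p)%Z with (k - Z.of_nat (S p) + 1)%Z by lia.
    rewrite Hs1; reflexivity. }
intros [|p|p] k; simpl.
- f_equal; lia.
- rewrite Hfwd; f_equal; lia.
- rewrite Hbwd; f_equal; lia.
Qed.

Lemma sum_n_telescope (u v : nat -> R) :
  (forall p, u p = v (S p) - v p) -> forall N, @eq R (sum_n u N) (v (S N) - v O).
Proof.
intros Huv N; induction N as [|N IH].
- rewrite sum_O; apply Huv.
- rewrite sum_Sn, IH, (Huv (S N)); change plus with Rplus; ring.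
Qed.

Lemma is_series_telescope (u v : nat -> R) (l : R) :
  (forall p, u p = v (S p) - v p) -> is_lim_seq v l -> is_series u (l - v O).
Proof.
intros Huv Hv.
enough (H : is_lim_seq (sum_n u) (l - v O)) by exact H.
apply (is_lim_seq_ext (fun N => v (S N) - v O)).
- intro N; symmetry; apply (sum_n_telescope u v Huv).
- apply is_lim_seq_minus'; [exact (proj1 (is_lim_seq_incr_1 v l) Hv) | apply is_lim_seq_const].
Qed.

Lemma is_lim_seq_telescope (u v : nat -> R) (s : R) :
  (forall p, u p = v (S p) - v p) -> is_series u s -> is_lim_seq v (v O + s).
Proof.
intros Huv Hs; apply is_lim_seq_incr_1.
apply (is_lim_seq_ext (fun N => v O + sum_n u N)).
- intro N; rewrite (sum_n_telescope u v Huv); ring.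
- apply is_lim_seq_plus'; [apply is_lim_seq_const | exact Hs].
Qed.

Lemma is_lim_seq_Z_shift (f : Z -> R) (l : R) (k : Z) :
  is_lim_seq (fun p => f (Z.of_nat p)) l -> is_lim_seq (fun p => f (k + Z.of_nat p)%Z) l.
Proof.
intro H; destruct (Z_le_gt_dec 0 k) as [Hk|Hk].
- apply (is_lim_seq_incr_n _ (Z.to_nat k)) in H.
  revert H; apply is_lim_seq_ext; intro p.
  f_equal; rewrite Nat2Z.inj_add, Z2Nat.id; lia.
- apply (is_lim_seq_incr_n _ (Z.to_nat (- k))).
  revert H; apply is_lim_seq_ext; intro p.
  f_equal; rewrite Nat2Z.inj_add, Z2Nat.id; lia.
Qed.

Lemma is_lim_seq_Z_shift_neg (f : Z -> R) (l : R) (k : Z) :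
  is_lim_seq (fun p => f (- Z.of_nat p)%Z) l -> is_lim_seq (fun p => f (k - Z.of_nat p)%Z) l.
Proof.
intro H.
apply (is_lim_seq_Z_shift (fun z => f (- z)%Z) l (- k)) in H.
revert H; apply is_lim_seq_ext; intro p; f_equal; lia.
Qed.

Lemma zsum_telescope (F m : Z -> R) (j k : Z) :
  (forall i, F i = m i - m (i - 1)%Z) -> (j <= k + 1)%Z ->
  zsum F j k = m k - m (j - 1)%Z.
Proof.
intros HF Hjk; unfold zsum.
assert (Hsum : forall N, Defs.sum_nat (fun t => F (j + Z.of_nat t)%Z) N
                         = m (j + Z.of_nat N - 1)%Z - m (j - 1)%Z).
{ induction N as [|N IH]; cbn [Defs.sum_nat].
  - replace (j + Z.of_nat 0 - 1)%Z with (j - 1)%Z by lia; ring.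
  - rewrite IH, HF.
    replace (j + Z.of_nat (S N) - 1)%Z with (j + Z.of_nat N)%Z by lia; ring. }
rewrite Hsum, Z2Nat.id by lia.
do 2 f_equal; lia.
Qed.

Section ZfunOnOrbit.

Variables r D m : Z -> R.
Hypothesis r_orbit : forall j k, s_iter j (r k) = r (k + j)%Z.
Hypothesis D_pos : forall i, 0 < D i.
Hypothesis cfun_sub1 : forall i, cfun (r i) - 1 = D (i + 1)%Z / D i.

Let D_neq0 i : D i <> 0.
Proof. specialize (D_pos i); lra. Qed.

Lemma prodc_orbit_nonneg k p :
  prodc (Z.of_nat p) (r k) = D (k + Z.of_nat p + 1)%Z / D k.
Proof.
unfold prodc.
replace (0 <=? Z.of_nat p)%Z with true by (symmetry; apply Z.leb_le; lia).
rewrite Nat2Z.id, Nat.add_1_r.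
replace (k + Z.of_nat p + 1)%Z with (k + Z.of_nat (S p))%Z by lia.
generalize (S p); clear p; intro N.
induction N as [|N IH]; cbn [Defs.prod_nat].
- rewrite Z.add_0_r; field; apply D_neq0.
- rewrite IH; unfold c_j; rewrite r_orbit, cfun_sub1.
  replace (k + Z.of_nat (S N))%Z with (k + Z.of_nat N + 1)%Z by lia.
  field; repeat split; apply D_neq0.
Qed.

Lemma prodc_orbit_neg k p :
  prodc (- Z.of_nat p - 1) (r k) = D (k - Z.of_nat p)%Z / D k.
Proof.
unfold prodc.
replace (0 <=? - Z.of_nat p - 1)%Z with false by (symmetry; apply Z.leb_gt; lia).
replace (- (- Z.of_nat p - 1) - 1)%Z with (Z.of_nat p) by lia.
rewrite Nat2Z.id.
induction p as [|p IH]; cbn [Defs.prod_nat].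
- rewrite Z.sub_0_r; field; apply D_neq0.
- rewrite IH; unfold c_j; rewrite r_orbit.
  replace (k + (- Z.of_nat p - 1))%Z with (k - Z.of_nat (S p))%Z by lia.
  rewrite cfun_sub1.
  replace (k - Z.of_nat (S p) + 1)%Z with (k - Z.of_nat p)%Z by lia.
  field; repeat split; apply D_neq0.
Qed.

Hypothesis D_incr : forall i, D i = m i - m (i - 1)%Z.
Hypothesis m_minus_infty : is_lim_seq (fun p => m (- Z.of_nat p)%Z) 0.
Hypothesis m_plus_infty : is_lim_seq (fun p => m (Z.of_nat p)) 1.

Lemma Zfun_orbit k : Zfun (r k) = / D k.
Proof.
assert (Hnonneg : is_series (fun p => prodc (Z.of_nat p) (r k))
                            (1 / D k - m (k + Z.of_nat 0)%Z / D k)).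
{ apply (is_series_telescope _ (fun p => m (k + Z.of_nat p)%Z / D k)).
  - intro p; rewrite prodc_orbit_nonneg, D_incr.
    replace (k + Z.of_nat p + 1 - 1)%Z with (k + Z.of_nat p)%Z by lia.
    replace (k + Z.of_nat (S p))%Z with (k + Z.of_nat p + 1)%Z by lia.
    field; apply D_neq0.
  - apply (is_lim_seq_scal_r _ (/ D k) 1), is_lim_seq_Z_shift, m_plus_infty. }
assert (Hneg : is_series (fun p => prodc (- Z.of_nat p - 1) (r k))
                         (0 - - m (k - Z.of_nat 0)%Z / D k)).
{ apply (is_series_telescope _ (fun p => - m (k - Z.of_nat p)%Z / D k)).
  - intro p; rewrite prodc_orbit_neg, D_incr.
    replace (k - Z.of_nat (S p))%Z with (k - Z.of_nat p - 1)%Z by lia.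
    field; apply D_neq0.
  - replace 0 with (- 0 / D k) by (field; apply D_neq0).
    apply (is_lim_seq_scal_r _ (/ D k) (- 0)), (is_lim_seq_opp _ 0).
    apply is_lim_seq_Z_shift_neg, m_minus_infty. }
unfold Zfun; rewrite (is_series_unique _ _ Hnonneg), (is_series_unique _ _ Hneg).
replace (k - Z.of_nat 0)%Z with k by lia.
replace (k + Z.of_nat 0)%Z with k by lia.
field; apply D_neq0.
Qed.

End ZfunOnOrbit.

Definition mincr (m : Z -> R) (i : Z) : R := m i - m (i - 1)%Z.
Definition ndecr (n : Z -> R) (i : Z) : R := n (i - 1)%Z - n i.
Definition ratio (m n : Z -> R) (i : Z) : R := ndecr n i / mincr m i.

Lemma is_series_ndecr_nonneg (n : Z -> R) :
  is_lim_seq (fun p => n (Z.of_nat p)) 0 ->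
  is_series (fun p => ndecr n (Z.of_nat p)) (n (-1)%Z).
Proof.
intro n_plus_infty.
replace (n (-1)%Z) with (- 0 - - n (Z.of_nat 0 - 1)%Z) by (simpl; ring).
apply (is_series_telescope _ (fun p => - n (Z.of_nat p - 1)%Z)).
- intro p; unfold ndecr.
  replace (Z.of_nat (S p) - 1)%Z with (Z.of_nat p) by lia; ring.
- apply (is_lim_seq_opp _ 0), (is_lim_seq_ext (fun p => n (-1 + Z.of_nat p)%Z)).
  + intro p; f_equal; lia.
  + apply is_lim_seq_Z_shift, n_plus_infty.
Qed.

Section PositiveABMN.

Variables a b m n : Z -> R.
Hypothesis abmn : ABMN a b m n.
Hypothesis ab_pos : forall i, 0 < a i /\ 0 < b i.

Let a_pos i : 0 < a i. Proof. apply ab_pos. Qed.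
Let b_pos i : 0 < b i. Proof. apply ab_pos. Qed.

Lemma mincr_succ i : mincr m (i + 1)%Z = 2 * a i + b i.
Proof.
unfold mincr; replace (i + 1 - 1)%Z with i by lia.
destruct (abmn i) as (_ & _ & Em & _ & Ebm & _).
pose proof (a_pos i); pose proof (b_pos i).
(* the first ABMN equation plus [b i] times the third one gives
   [(a + b) (m_{i+1} - m_i) = (a + b) (2a + b)] *)
apply (Rmult_eq_reg_l (a i + b i)); [nra | lra].
Qed.

Lemma ndecr_eq i : ndecr n i = a i + 2 * b i.
Proof.
unfold ndecr; destruct (abmn i) as (_ & _ & _ & En & _ & Ean).
pose proof (a_pos i); pose proof (b_pos i).
apply (Rmult_eq_reg_l (a i + b i)); [nra | lra].
Qed.

Lemma mincr_eq i : mincr m i = a i ^ 2 / b i.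
Proof.
pose proof (mincr_succ i) as Hm; unfold mincr in *.
replace (i + 1 - 1)%Z with i in Hm by lia.
destruct (abmn i) as (_ & _ & _ & _ & Ebm & _).
pose proof (a_pos i); pose proof (b_pos i).
apply (Rmult_eq_reg_l (b i)); [field_simplify; nra | lra].
Qed.

Lemma ndecr_succ i : ndecr n (i + 1)%Z = b i ^ 2 / a i.
Proof.
pose proof (ndecr_eq i) as Hn; unfold ndecr in *.
replace (i + 1 - 1)%Z with i by lia.
destruct (abmn i) as (_ & _ & _ & _ & _ & Ean).
pose proof (a_pos i); pose proof (b_pos i).
apply (Rmult_eq_reg_l (a i)); [field_simplify; nra | lra].
Qed.

Lemma mincr_pos i : 0 < mincr m i.
Proof.
rewrite mincr_eq.
pose proof (a_pos i); pose proof (b_pos i).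
apply Rdiv_lt_0_compat; nra.
Qed.

Lemma ndecr_pos i : 0 < ndecr n i.
Proof. rewrite ndecr_eq; pose proof (a_pos i); pose proof (b_pos i); lra. Qed.

Lemma ndecr_le_mincr_succ i : ndecr n i <= 2 * mincr m (i + 1)%Z.
Proof.
rewrite mincr_succ, ndecr_eq.
pose proof (a_pos i); pose proof (b_pos i); lra.
Qed.

Lemma ratio_param i : ratio m n i = b i / a i * (1 + 2 * (b i / a i)).
Proof.
unfold ratio; rewrite mincr_eq, ndecr_eq.
pose proof (a_pos i); pose proof (b_pos i).
field; lra.
Qed.

Lemma ratio_succ_param i : ratio m n (i + 1)%Z = (b i / a i) ^ 2 / (2 + b i / a i).
Proof.
unfold ratio; rewrite mincr_succ, ndecr_succ.
pose proof (a_pos i); pose proof (b_pos i).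
field; lra.
Qed.

Let t_pos i : 0 < b i / a i.
Proof. apply Rdiv_lt_0_compat; auto. Qed.

Lemma s_iter_ratio j k : s_iter j (ratio m n k) = ratio m n (k + j)%Z.
Proof.
apply s_iter_orbit; intro i.
- rewrite (ratio_param i), ratio_succ_param; apply sfun_param, t_pos.
- rewrite (ratio_param i), ratio_succ_param; apply sfun_m1_param, t_pos.
Qed.

Lemma cfun_ratio_sub1 i : cfun (ratio m n i) - 1 = mincr m (i + 1)%Z / mincr m i.
Proof.
rewrite ratio_param, cfun_param, mincr_succ by apply t_pos.
rewrite mincr_eq.
pose proof (a_pos i); pose proof (b_pos i).
field; lra.
Qed.

Section Standard.

Hypothesis m_minus_infty : is_lim_seq (fun p => m (- Z.of_nat p)%Z) 0.
Hypothesis n_plus_infty : is_lim_seq (fun p => n (Z.of_nat p)) 0.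
Hypothesis m_plus_infty : is_lim_seq (fun p => m (Z.of_nat p)) 1.

Lemma inv_Zfun_ratio k : / Zfun (ratio m n k) = mincr m k.
Proof.
rewrite (Zfun_orbit _ _ m s_iter_ratio mincr_pos cfun_ratio_sub1) by easy.
apply Rinv_inv.
Qed.

Lemma ratio_div_Zfun k : ratio m n k / Zfun (ratio m n k) = ndecr n k.
Proof.
unfold Rdiv at 1; rewrite inv_Zfun_ratio.
unfold ratio; field; apply Rgt_not_eq, mincr_pos.
Qed.

Lemma gfun_ratio k : gfun (ratio m n k) = a k.
Proof.
unfold gfun; rewrite inv_Zfun_ratio, ratio_param, cfun_param, ffun_param by apply t_pos.
rewrite mincr_eq.
pose proof (a_pos k); pose proof (b_pos k).
field; repeat split; lra.
Qed.

Lemma hfun_ratio k : hfun (ratio m n k) = b k.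
Proof.
unfold hfun; rewrite inv_Zfun_ratio, ratio_param, dfun_param, ffun_param by apply t_pos.
rewrite mincr_eq.
pose proof (a_pos k); pose proof (b_pos k).
field; repeat split; nra.
Qed.

Lemma ex_series_ndecr_neg : ex_series (fun p => ndecr n (- Z.of_nat p - 1)%Z).
Proof.
apply (@ex_series_le R_AbsRing R_CompleteNormedModule _
         (fun p => 2 * mincr m (- Z.of_nat p)%Z)).
- intro p; change norm with Rabs.
  rewrite Rabs_pos_eq by apply Rlt_le, ndecr_pos.
  replace (- Z.of_nat p)%Z with (- Z.of_nat p - 1 + 1)%Z at 2 by lia.
  apply ndecr_le_mincr_succ.
- exists (0 - - 2 * m (- Z.of_nat 0)%Z).
  apply (is_series_telescope _ (fun p => - 2 * m (- Z.of_nat p)%Z)).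
  + intro p; unfold mincr.
    replace (- Z.of_nat (S p))%Z with (- Z.of_nat p - 1)%Z by lia; ring.
  + replace 0 with (- 2 * 0) by ring.
    apply (is_lim_seq_scal_l _ (- 2) 0), m_minus_infty.
Qed.

Lemma is_lim_seq_n_minus_infty :
  is_lim_seq (fun p => n (- Z.of_nat p)%Z)
    (Series (fun p => ndecr n (Z.of_nat p)) + Series (fun p => ndecr n (- Z.of_nat p - 1)%Z)).
Proof.
rewrite (is_series_unique _ _ (is_series_ndecr_nonneg n n_plus_infty)).
apply is_lim_seq_incr_1.
apply (is_lim_seq_ext (fun p => n (- Z.of_nat p - 1)%Z)).
- intro p; f_equal; lia.
- apply (is_lim_seq_telescope (fun p => ndecr n (- Z.of_nat p - 1)%Z)).
  + intro p; unfold ndecr; f_equal; f_equal; lia.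
  + apply Series_correct, ex_series_ndecr_neg.
Qed.

End Standard.

End PositiveABMN.

Theorem mainTheorem19 :
  forall x : R, 0 < x ->
  forall a b m n : Z -> R,
    standard_ABMN a b m n -> central_ratio m n = x ->
    (forall k : Z, a k = gfun (s_iter k x) /\ b k = hfun (s_iter k x)) /\
    (forall j k : Z, (j < k)%Z ->
       m k - m j = zsum (fun i => / Zfun (s_iter i x)) (j + 1) k /\
       n j - n k = zsum (fun i => s_iter i x / Zfun (s_iter i x)) (j + 1) k) /\
    (forall k : Z,
       m k - m (k - 1)%Z = / Zfun (s_iter k x) /\
       n (k - 1)%Z - n k = s_iter k x / Zfun (s_iter k x)) /\
    (forall j k : nat,
       Mpr (Z.of_nat j + 1) (Z.of_nat k + 1) m n =
       / zsum (fun i => / Zfun (s_iter i x)) (- Z.of_nat j) (Z.of_nat k + 1)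
       * zsum (fun i => s_iter i x / Zfun (s_iter i x)) (- Z.of_nat j) (Z.of_nat k + 1)) /\
    (ex_series (fun p : nat => s_iter (Z.of_nat p) x / Zfun (s_iter (Z.of_nat p) x)) /\
     ex_series (fun p : nat => s_iter (- Z.of_nat p - 1)%Z x
                               / Zfun (s_iter (- Z.of_nat p - 1)%Z x)) /\
     is_lim_seq (fun p : nat => n (- Z.of_nat p)%Z)
       (Series (fun p : nat => s_iter (Z.of_nat p) x / Zfun (s_iter (Z.of_nat p) x))
        + Series (fun p : nat => s_iter (- Z.of_nat p - 1)%Z x
                                 / Zfun (s_iter (- Z.of_nat p - 1)%Z x)))).
Proof.
intros x _ a b m n [[abmn ab_pos] [m_minus [n_plus m_plus]]] Hx.
assert (Horbit : forall i, s_iter i x = ratio m n i)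
  by (intro i; rewrite <- Hx; apply (s_iter_ratio a b m n abmn ab_pos i 0)).
assert (HD : forall i, / Zfun (s_iter i x) = mincr m i)
  by (intro i; rewrite Horbit; apply (inv_Zfun_ratio a b); auto).
assert (HE : forall i, s_iter i x / Zfun (s_iter i x) = ndecr n i)
  by (intro i; rewrite Horbit; apply (ratio_div_Zfun a b); auto).
assert (Hm : forall j k, (j <= k + 1)%Z ->
               zsum (fun i => / Zfun (s_iter i x)) j k = m k - m (j - 1)%Z)
  by (intros; apply zsum_telescope; auto).
assert (Hn : forall j k, (j <= k + 1)%Z ->
               zsum (fun i => s_iter i x / Zfun (s_iter i x)) j k = n (j - 1)%Z - n k).
{ intros j k Hjk.
  rewrite (zsum_telescope _ (fun i => - n i)); [ring | | exact Hjk].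
  intro i; rewrite HE; unfold ndecr; ring. }
split; [|split; [|split; [|split]]].
- intro k; rewrite Horbit; split; symmetry;
    [apply (gfun_ratio a b) | apply (hfun_ratio a b)]; auto.
- intros j k Hjk; rewrite Hm, Hn by lia.
  replace (j + 1 - 1)%Z with j by lia; auto.
- intro k; rewrite HD, HE; auto.
- intros j k; unfold Mpr; rewrite Hm, Hn by lia.
  replace (- (Z.of_nat j + 1))%Z with (- Z.of_nat j - 1)%Z by lia.
  unfold Rdiv; ring.
- rewrite !(Series_ext _ _ (fun p => HE _)).
  repeat split.
  + eapply ex_series_ext; [intro p; symmetry; apply HE |].
    eexists; apply is_series_ndecr_nonneg; auto.
  + eapply ex_series_ext; [intro p; symmetry; apply HE |].
    apply (ex_series_ndecr_neg a b m); auto.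
  + apply (is_lim_seq_n_minus_infty a b m); auto.
Qed.
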